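(* Let $n\ge 1$, let $C$ be a convex subset of $\mathbb{R}^n$, let $M$ be a smooth manifold, and let $f:\mathbb{R}^n\to M$ be a differentiable function. If $\mathrm{Sens}_C(f)=S_n$, then $f$ is one-to-one on $C$.
   Context: Sign of a real number: $\mathrm{sgn}(x)=+1,0,-1$ according as $x>0$, $x=0$, $x<0$. For $g:\mathbb{R}^n\to\mathbb{R}$ and a nonempty $C\subseteq\mathbb{R}^n$, define $\mathrm{sign}_C(g)=+1$ if $g(c)>0$ for all $c\in C$; $0$ if $g(c)=0$ for all $c\in C$; $-1$ if $g(c)<0$ for all $c\in C$; and $u$ (a formal symbol) otherwise. If $g$ is differentiable on $C$, its total sign over $C$ is the tuple $\mathrm{Sign}_C(g)=\big(\mathrm{sign}_C(\partial g/\partial x_1),\dots,\mathrm{sign}_C(\partial g/\partial x_n)\big)\in\{1,0,-1,u\}^n$. $S_n$ denotes the set of all nonzero $n$-tuples $s=(s_1,\dots,s_n)\in\{-1,0,1\}^n$ whose first nonzero entry equals $1$. A tuple $t=(t_1,\dots,t_n)\in\{1,0,-1,u\}^n$ eliminates $s\in S_n$ if: (i) $t_i\neq0$ and $s_i\neq0$ for some $i$; (ii) there is $k\in\{+1,-1\}$ with $t_i=k s_i$ for all $i$ such that $s_i\neq 0$ and $t_i\neq0$; (iii) $s_i=0$ whenever $t_i=u$. For a smooth manifold $M$, a convex $C\subseteq\mathbb{R}^n$ and a differentiable $f:\mathbb{R}^n\to M$, $\mathrm{Sens}_C(f)$ is the set of all $v\in S_n$ for which there exists a differentiable function $\pi:M\to\mathbb{R}$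 such that $\mathrm{Sign}_C(\pi\circ f)$ eliminates $v$. *)

From Stdlib Require Import Reals Lra Lia ZArith Arith.
Open Scope R_scope.

(** * Points of R^n
    A point of R^n is a function [nat -> R] vanishing at indices >= n
    (coordinates x_1..x_n are indices 0..n-1). *)
Record Vec (n : nat) := mkVec {
  vc :> nat -> R;
  vsupp : forall i, (n <= i)%nat -> vc i = 0 }.
Arguments mkVec {n} _ _.
Arguments vc {n} _ _.

Definition vadd {n} (x y : Vec n) : Vec n.
Proof.
  refine (mkVec (fun i => vc x i + vc y i) _).
  intros i Hi; rewrite (vsupp n x i Hi), (vsupp n y i Hi); ring.
Defined.

Definition vscale {n} (t : R) (x : Vec n) : Vec n.
Proof.
  refine (mkVec (fun i => t * vc x i) _).
  intros i Hi; rewrite (vsupp n x i Hi); ring.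
Defined.

Definition vsub {n} (x y : Vec n) : Vec n := vadd x (vscale (-1) y).

Definition basis (n i : nat) : Vec n.
Proof.
  refine (mkVec (fun j => if andb (Nat.eqb j i) (Nat.ltb i n) then 1 else 0) _).
  intros j Hj. destruct (Nat.eqb_spec j i); destruct (Nat.ltb_spec i n); simpl;
  try reflexivity; lia.
Defined.

Fixpoint rsum (n : nat) (f : nat -> R) : R :=
  match n with O => 0 | S k => rsum k f + f k end.

(** l^1 norm (all norms on R^n are equivalent) *)
Definition vnorm {n} (x : Vec n) : R := rsum n (fun i => Rabs (vc x i)).

Definition open_set {n} (O : Vec n -> Prop) : Prop :=
  forall x, O x -> exists r, 0 < r /\ forall y, vnorm (vsub y x) < r -> O y.

Definition continuous_at_v {n} (g : Vec n -> R) (x : Vec n) : Prop :=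
  forall eps, 0 < eps -> exists delta, 0 < delta /\
    forall y, vnorm (vsub y x) < delta -> Rabs (g y - g x) < eps.

(** Frechet derivative of g : R^n -> R at x, with gradient l (l i = dg/dx_{i+1}) *)
Definition frechet {n} (g : Vec n -> R) (x : Vec n) (l : nat -> R) : Prop :=
  forall eps, 0 < eps -> exists delta, 0 < delta /\
    forall h : Vec n, vnorm h < delta ->
      Rabs (g (vadd x h) - g x - rsum n (fun i => l i * vc h i)) <= eps * vnorm h.

Definition differentiable_at {n} (g : Vec n -> R) (x : Vec n) : Prop :=
  exists l, frechet g x l.

Fixpoint Ck {m} (k : nat) (U : Vec m -> Prop) (g : Vec m -> R) : Prop :=
  match k with
  | O => forall x, U x -> continuous_at_v g x
  | S k' => exists dg : nat -> Vec m -> R,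
      (forall x, U x -> frechet g x (fun i => dg i x)) /\
      (forall i, (i < m)%nat -> Ck k' U (dg i))
  end.

Definition smooth_on {m} (U : Vec m -> Prop) (g : Vec m -> R) : Prop :=
  forall k, Ck k U g.

Definition smooth_map_on {m p} (U : Vec m -> Prop) (T : Vec m -> Vec p) : Prop :=
  forall j, (j < p)%nat -> smooth_on U (fun x => vc (T x) j).

Record SmoothManifold := {
  mcar :> Type;
  mdim : nat;
  midx : Type;
  mdom : midx -> mcar -> Prop;
  mchart : midx -> mcar -> Vec mdim;
  m_cover : forall p, exists i, mdom i p;
  m_inj : forall i p q, mdom i p -> mdom i q -> mchart i p = mchart i q -> p = q;
  m_open : forall i j,
    open_set (fun x => exists p, mdom i p /\ mdom j p /\ mchart i p = x);
  m_compat : forall i j, exists T : Vec mdim -> Vec mdim,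
    smooth_map_on (fun x => exists p, mdom i p /\ mdom j p /\ mchart i p = x) T /\
    (forall p, mdom i p -> mdom j p -> T (mchart i p) = mchart j p);
  m_hausdorff : forall p q, p <> q -> exists O1 O2 : mcar -> Prop,
    (forall i, open_set (fun x => exists r, mdom i r /\ O1 r /\ mchart i r = x)) /\
    (forall i, open_set (fun x => exists r, mdom i r /\ O2 r /\ mchart i r = x)) /\
    O1 p /\ O2 q /\ (forall r, ~ (O1 r /\ O2 r));
  m_countable : exists e : midx -> nat, forall i j, e i = e j -> i = j
    (* countable atlas, equivalent to second countability *)
}.

Definition Mopen (M : SmoothManifold) (O : M -> Prop) : Prop :=
  forall i, open_set (fun x => exists r, mdom M i r /\ O r /\ mchart M i r = x).

Definition diff_into {n} (M : SmoothManifold) (f : Vec n -> M) : Prop :=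
  (forall O, Mopen M O -> open_set (fun x => O (f x))) /\
  (forall x i, mdom M i (f x) -> forall k, (k < mdim M)%nat ->
     differentiable_at (fun y => vc (mchart M i (f y)) k) x).

Definition diff_from (M : SmoothManifold) (pi : M -> R) : Prop :=
  forall p i, mdom M i p -> exists g : Vec (mdim M) -> R,
    (forall q, mdom M i q -> g (mchart M i q) = pi q) /\
    differentiable_at g (mchart M i p).

Definition partial {n} (g : Vec n -> R) (i : nat) (c : Vec n) (l : R) : Prop :=
  derivable_pt_lim (fun t => g (vadd c (vscale t (basis n i)))) 0 l.

Definition convex {n} (C : Vec n -> Prop) : Prop :=
  forall x y, C x -> C y -> forall t, 0 <= t <= 1 ->
    C (vadd (vscale (1 - t) x) (vscale t y)).

(** the values {1, 0, -1, u} *)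
Inductive Sgn := SPos | SZero | SNeg | SU.

(** sign_C(dg/dx_{i+1}) = t  (C nonempty, g differentiable on C) *)
Definition sign_partial {n} (g : Vec n -> R) (C : Vec n -> Prop) (i : nat) (t : Sgn) : Prop :=
  let P := forall c, C c -> exists l, partial g i c l /\ l > 0 in
  let Z := forall c, C c -> partial g i c 0 in
  let N := forall c, C c -> exists l, partial g i c l /\ l < 0 in
  match t with
  | SPos => P
  | SZero => Z
  | SNeg => N
  | SU => ~ P /\ ~ Z /\ ~ N
  end.

(** Sign_C(g) = t  (only the first n entries of t are meaningful) *)
Definition total_sign {n} (g : Vec n -> R) (C : Vec n -> Prop) (t : nat -> Sgn) : Prop :=
  (exists c, C c) /\
  (forall c, C c -> differentiable_at g c) /\
  forall i, (i < n)%nat -> sign_partial g C i (t i).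

Definition inS (n : nat) (s : nat -> Z) : Prop :=
  (forall i, s i = 1%Z \/ s i = 0%Z \/ s i = (-1)%Z) /\
  (forall i, (n <= i)%nat -> s i = 0%Z) /\
  (exists i, (i < n)%nat /\ s i <> 0%Z) /\
  (forall i, s i <> 0%Z -> (forall j, (j < i)%nat -> s j = 0%Z) -> s i = 1%Z).

Definition sgn_of_Z (z : Z) : Sgn :=
  match z with Z0 => SZero | Zpos _ => SPos | Zneg _ => SNeg end.

Definition eliminates (n : nat) (t : nat -> Sgn) (s : nat -> Z) : Prop :=
  (exists i, (i < n)%nat /\ t i <> SZero /\ s i <> 0%Z) /\
  (exists k : Z, (k = 1%Z \/ k = (-1)%Z) /\
     forall i, (i < n)%nat -> s i <> 0%Z -> t i <> SZero -> t i = sgn_of_Z (k * s i)) /\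
  (forall i, (i < n)%nat -> t i = SU -> s i = 0%Z).

Definition Sens {n} (M : SmoothManifold) (C : Vec n -> Prop) (f : Vec n -> M)
    (v : nat -> Z) : Prop :=
  inS n v /\ exists pi : M -> R, diff_from M pi /\
    exists t, total_sign (fun x => pi (f x)) C t /\ eliminates n t v.

From Stdlib Require Import Reals ZArith Lra Lia.
From Stdlib Require Import Classical ClassicalEpsilon FunctionalExtensionality ProofIrrelevance.
Open Scope R_scope.

(* Suppose x <> y in C with f x = f y and put d = y - x.  Let v be the sign
   vector of d, normalised so that its first nonzero entry is 1; v lies in S_n,
   so some differentiable pi : M -> R has a total sign of g = pi o f over C
   eliminating v.  Elimination means that at every point of C each term
   d_i * dg/dx_i has the same sign k * a (a the first nonzero entry of d),
   and at least one term is nonzero, so the directional derivative of g along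
   d never vanishes on C.  By convexity the segment [x, y] lies in C, and the
   mean value theorem on it produces a point where that derivative is
   g y - g x = 0. *)

Lemma vec_ext n (a b : Vec n) : (forall i, vc a i = vc b i) -> a = b.
Proof.
  destruct a as [a Ha], b as [b Hb]; simpl; intro H.
  assert (a = b) by (apply functional_extensionality; auto). subst.
  f_equal; apply proof_irrelevance.
Qed.

Lemma rsum_ext m f g : (forall i, (i < m)%nat -> f i = g i) -> rsum m f = rsum m g.
Proof.
  induction m as [|m IH]; simpl; intros H; [reflexivity|].
  rewrite IH by (intros; apply H; lia). rewrite H by lia. reflexivity.
Qed.

Lemma rsum_scal m s f : rsum m (fun i => s * f i) = s * rsum m f.
Proof. induction m as [|m IH]; simpl; [ring|]. rewrite IH; ring. Qed.

Lemma rsum_nonneg m f : (forall i, (i < m)%nat -> 0 <= f i) -> 0 <= rsum m f.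
Proof.
  induction m as [|m IH]; simpl; intros H; [lra|].
  assert (0 <= f m) by (apply H; lia).
  assert (0 <= rsum m f) by (apply IH; intros; apply H; lia). lra.
Qed.

Lemma rsum_pos m f j : (forall i, (i < m)%nat -> 0 <= f i) ->
  (j < m)%nat -> 0 < f j -> 0 < rsum m f.
Proof.
  induction m as [|m IH]; simpl; intros H Hj Hfj; [lia|].
  assert (0 <= f m) by (apply H; lia).
  destruct (Nat.eq_dec j m) as [->|Hjm].
  - assert (0 <= rsum m f) by (apply rsum_nonneg; intros; apply H; lia). lra.
  - assert (0 < rsum m f) by (apply IH; auto; lia). lra.
Qed.

Lemma rsum_basis n i l m : (i < n)%nat ->
  rsum m (fun j => l j * vc (basis n i) j) = if Nat.ltb i m then l i else 0.
Proof.
  intro Hi. induction m as [|m IH]; cbn [rsum]; [reflexivity|]. rewrite IH. simpl.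
  destruct (Nat.eqb_spec m i); destruct (Nat.ltb_spec i n); try lia; simpl.
  - subst. destruct (Nat.ltb_spec i i); destruct (Nat.ltb_spec i (S i)); try lia. ring.
  - destruct (Nat.ltb_spec i m); destruct (Nat.ltb_spec i (S m)); try lia; ring.
Qed.

Lemma vnorm_nonneg n (d : Vec n) : 0 <= vnorm d.
Proof. apply rsum_nonneg; intros; apply Rabs_pos. Qed.

Lemma vnorm_vscale n s (d : Vec n) : vnorm (vscale s d) = Rabs s * vnorm d.
Proof. unfold vnorm. rewrite <- rsum_scal. apply rsum_ext; intros; apply Rabs_mult. Qed.

Lemma vadd_vscale0 n (c d : Vec n) : vadd c (vscale 0 d) = c.
Proof. apply vec_ext; intro i; simpl; ring. Qed.

Lemma ex_least_nat (P : nat -> Prop) :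
  (exists i, P i) -> exists i, P i /\ forall j, (j < i)%nat -> ~ P j.
Proof.
  intros [i Hi]. revert Hi. induction i as [i IH] using (well_founded_induction lt_wf).
  intro Hi. destruct (classic (exists j, (j < i)%nat /\ P j)) as [[j [Hj Pj]]|Hnone].
  - exact (IH j Hj Pj).
  - exists i. split; [exact Hi|]. intros j Hj Pj. apply Hnone; eauto.
Qed.

Lemma vec_neq_coord n (x y : Vec n) : x <> y ->
  exists i, (i < n)%nat /\ vc (vsub y x) i <> 0.
Proof.
  intro Hne. apply NNPP; intro Hall. apply Hne, vec_ext. intro i.
  destruct (Nat.lt_ge_cases i n) as [Hi|Hi].
  - apply NNPP; intro Hxy. apply Hall. exists i. split; [exact Hi|].
    simpl. intro; apply Hxy; lra.
  - now rewrite (vsupp n x i Hi), (vsupp n y i Hi).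
Qed.

Lemma vec_neq_lead_coord n (x y : Vec n) : x <> y ->
  exists i0, (i0 < n)%nat /\ vc (vsub y x) i0 <> 0 /\
    forall j, (j < i0)%nat -> vc (vsub y x) j = 0.
Proof.
  intro Hne.
  destruct (ex_least_nat _ (vec_neq_coord n x y Hne)) as [i0 [[Hi0 Ha] Hleast]].
  exists i0. split; [exact Hi0|]. split; [exact Ha|].
  intros j Hj. apply NNPP; intro Hdj. apply (Hleast j Hj). split; [lia|exact Hdj].
Qed.

Lemma frechet_dir_deriv n (g : Vec n -> R) c l (d : Vec n) : frechet g c l ->
  derivable_pt_lim (fun s => g (vadd c (vscale s d))) 0 (rsum n (fun i => l i * vc d i)).
Proof.
  intros Hf eps He. set (N := vnorm d). assert (HN : 0 <= N) by apply vnorm_nonneg.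
  set (D := rsum n (fun i => l i * vc d i)).
  destruct (Hf (eps / (2 * (N + 1)))) as [del [Hdel H]].
  { apply Rdiv_lt_0_compat; lra. }
  assert (Hp : 0 < del / (N + 1)) by (apply Rdiv_lt_0_compat; lra).
  exists (mkposreal _ Hp). intros s Hs0 Hs. simpl in Hs.
  rewrite Rplus_0_l, vadd_vscale0.
  assert (Has : 0 < Rabs s) by (apply Rabs_pos_lt; auto).
  assert (Hsmall : Rabs s * (N + 1) < del).
  { apply (Rmult_lt_compat_r (N + 1)) in Hs; [|lra].
    unfold Rdiv in Hs. rewrite Rmult_assoc, Rinv_l in Hs by lra. lra. }
  assert (Hlin : rsum n (fun i => l i * vc (vscale s d) i) = s * D).
  { unfold D. rewrite <- rsum_scal. apply rsum_ext; intros; simpl; ring. }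
  specialize (H (vscale s d)). rewrite vnorm_vscale, Hlin in H.
  fold N in H. specialize (H ltac:(nra)).
  set (X := g (vadd c (vscale s d)) - g c - s * D) in *.
  assert (HX : Rabs X < eps * Rabs s).
  { assert (Hq : N * / (2 * (N + 1)) < 1).
    { apply (Rmult_lt_reg_r (2 * (N + 1))); [lra|].
      rewrite Rmult_assoc, Rinv_l by lra. lra. }
    assert (0 < eps * Rabs s) by nra.
    replace (eps / (2 * (N + 1)) * (Rabs s * N))
      with ((eps * Rabs s) * (N * / (2 * (N + 1)))) in H by (unfold Rdiv; ring).
    nra. }
  replace ((g (vadd c (vscale s d)) - g c) / s - D) with (X * / s)
    by (unfold X; field; auto).
  rewrite Rabs_mult, Rabs_inv.
  apply (Rmult_lt_reg_r (Rabs s)); [exact Has|].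
  rewrite Rmult_assoc, Rinv_l by lra. lra.
Qed.

Lemma derivable_pt_lim_shift (F G : R -> R) t L : (forall s, F s = G (t + s)) ->
  derivable_pt_lim F 0 L -> derivable_pt_lim G t L.
Proof.
  intros HF H eps He. destruct (H eps He) as [del Hd]. exists del. intros h H0 H1.
  specialize (Hd h H0 H1). rewrite Rplus_0_l, HF, (HF 0), Rplus_0_r in Hd. exact Hd.
Qed.

Lemma partial_of_frechet n (g : Vec n -> R) c l i : (i < n)%nat ->
  frechet g c l -> partial g i c (l i).
Proof.
  intros Hi Hf. unfold partial. pose proof (frechet_dir_deriv n g c l (basis n i) Hf) as H.
  rewrite rsum_basis in H by exact Hi. destruct (Nat.ltb_spec i n); [exact H|lia].
Qed.

Lemma mean_value_segment n (g : Vec n -> R) (x y : Vec n) :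
  (forall s, 0 <= s <= 1 -> differentiable_at g (vadd (vscale (1 - s) x) (vscale s y))) ->
  exists s l, 0 <= s <= 1 /\ frechet g (vadd (vscale (1 - s) x) (vscale s y)) l /\
    g y - g x = rsum n (fun i => l i * vc (vsub y x) i).
Proof.
  intro Hdiff. set (p := fun s => vadd (vscale (1 - s) x) (vscale s y)). fold p in Hdiff.
  destruct (choice (fun s l => 0 <= s <= 1 -> frechet g (p s) l)) as [F HF].
  { intro s. destruct (classic (0 <= s <= 1)) as [Hs|Hs].
    - destruct (Hdiff s Hs) as [l Hl]. exists l; auto.
    - exists (fun _ => 0). intro; contradiction. }
  set (D := fun s => rsum n (fun i => F s i * vc (vsub y x) i)).
  assert (Hder : forall s, 0 <= s <= 1 -> derivable_pt_lim (fun s => g (p s)) s (D s)).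
  { intros s Hs.
    apply derivable_pt_lim_shift with (F := fun u => g (vadd (p s) (vscale u (vsub y x)))).
    - intro u. f_equal. apply vec_ext. intro i. unfold p; simpl. ring.
    - apply frechet_dir_deriv, HF, Hs. }
  destruct (MVT_cor2 (fun s => g (p s)) D 0 1 Rlt_0_1 Hder) as [s [Hmvt Hs]].
  assert (E0 : p 0 = x) by (apply vec_ext; intro; unfold p; simpl; ring).
  assert (E1 : p 1 = y) by (apply vec_ext; intro; unfold p; simpl; ring).
  exists s, (F s). split; [lra|]. split; [apply HF; lra|].
  rewrite <- E0, <- E1 at 1. rewrite Hmvt. unfold D. ring.
Qed.

Definition sgnZ (r : R) : Z :=
  if Rlt_dec 0 r then 1%Z else if Rlt_dec r 0 then (-1)%Z else 0%Z.

Lemma sgnZ_cases r :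
  (0 < r /\ sgnZ r = 1%Z) \/ (r < 0 /\ sgnZ r = (-1)%Z) \/ (r = 0 /\ sgnZ r = 0%Z).
Proof.
  unfold sgnZ. destruct (Rlt_dec 0 r); [auto|].
  destruct (Rlt_dec r 0); [auto|]. right; right; split; [lra|reflexivity].
Qed.

Lemma sgnZ_eq0 r : sgnZ r = 0%Z <-> r = 0.
Proof. split; destruct (sgnZ_cases r) as [[? ->]|[[? ->]|[? ->]]]; try easy; lra. Qed.

Definition sgn_compat (t : Sgn) (r : R) : Prop :=
  match t with SPos => 0 < r | SNeg => r < 0 | SZero => r = 0 | SU => True end.

Lemma sign_partial_compat n (g : Vec n -> R) C i t c L :
  sign_partial g C i t -> C c -> partial g i c L -> sgn_compat t L.
Proof.
  intros Hs Hc Hp. unfold partial in Hp.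
  destruct t; simpl in *; try exact I.
  - destruct (Hs c Hc) as [l [Hl Hl0]]. now rewrite (uniqueness_limite _ _ _ _ Hp Hl).
  - exact (uniqueness_limite _ _ _ _ Hp (Hs c Hc)).
  - destruct (Hs c Hc) as [l [Hl Hl0]]. now rewrite (uniqueness_limite _ _ _ _ Hp Hl).
Qed.

(* No truncation at [n] is needed: [vc d i = 0] for [i >= n]. *)
Lemma inS_lead_sign n (d : Vec n) i0 :
  (i0 < n)%nat -> vc d i0 <> 0 -> (forall j, (j < i0)%nat -> vc d j = 0) ->
  inS n (fun i => sgnZ (vc d i0 * vc d i)).
Proof.
  intros Hi0 Ha Hlead. set (a := vc d i0) in *.
  assert (Hv0 : sgnZ (a * a) = 1%Z).
  { destruct (sgnZ_cases (a * a)) as [[_ ->]|[[? _]|[? _]]]; auto; nra. }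
  assert (Hbefore : forall j, (j < i0)%nat -> sgnZ (a * vc d j) = 0%Z).
  { intros j Hj. apply sgnZ_eq0. rewrite Hlead by exact Hj. ring. }
  split; [|split; [|split]].
  - intro i. destruct (sgnZ_cases (a * vc d i)) as [[_ ->]|[[_ ->]|[_ ->]]]; auto.
  - intros i Hi. apply sgnZ_eq0. rewrite (vsupp n d i Hi). ring.
  - exists i0. split; [exact Hi0|]. fold a. rewrite Hv0. discriminate.
  - intros i Hi Hfirst. destruct (lt_eq_lt_dec i i0) as [[Hlt| ->]|Hgt].
    + now rewrite Hbefore in Hi.
    + exact Hv0.
    + specialize (Hfirst i0 Hgt). cbv beta in Hfirst. fold a in Hfirst. congruence.
Qed.

Lemma eliminated_term_sign (k : Z) (t : Sgn) (a b L : R) :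
  (k = 1%Z \/ k = (-1)%Z) -> sgn_compat t L ->
  (sgnZ (a * b) <> 0%Z -> t <> SZero -> t = sgn_of_Z (k * sgnZ (a * b))) ->
  (t = SU -> sgnZ (a * b) = 0%Z) ->
  0 <= IZR k * a * (L * b) /\
  (sgnZ (a * b) <> 0%Z -> t <> SZero -> 0 < IZR k * a * (L * b)).
Proof.
  intros Hk Ht Hsame Hu.
  replace (IZR k * a * (L * b)) with (IZR k * L * (a * b)) by ring.
  destruct (sgnZ_cases (a * b)) as [[Hab E]|[[Hab E]|[Hab E]]]; rewrite E in *;
  [| | rewrite Hab; split; [lra|congruence]];
  destruct Hk as [-> | ->]; destruct t; simpl in *;
  try (specialize (Hu eq_refl); discriminate);
  try (assert (Hc := Hsame ltac:(discriminate) ltac:(discriminate)); discriminate Hc);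
  try (rewrite Ht); split; intros; try nra; try congruence.
Qed.

Lemma eliminates_dir_deriv_neq0 n (d : Vec n) (a : R) (t : nat -> Sgn) (l : nat -> R) :
  a <> 0 -> eliminates n t (fun i => sgnZ (a * vc d i)) ->
  (forall i, (i < n)%nat -> sgn_compat (t i) (l i)) ->
  rsum n (fun i => l i * vc d i) <> 0.
Proof.
  intros Ha [[i1 [Hi1 [Ht1 Hs1]]] [[k [Hk Hsame]] Hu]] Hl Hsum.
  assert (Hpos : 0 < IZR k * a * rsum n (fun i => l i * vc d i)).
  { rewrite <- rsum_scal. apply rsum_pos with i1; [|exact Hi1|].
    - intros i Hi. apply (eliminated_term_sign k (t i)); auto.
    - apply (eliminated_term_sign k (t i1)); auto. }
  rewrite Hsum, Rmult_0_r in Hpos. lra.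
Qed.

Theorem theorem3p1 (n : nat) (Hn : (1 <= n)%nat) (C : Vec n -> Prop)
  (HC : convex C) (M : SmoothManifold) (f : Vec n -> M) (Hf : diff_into M f)
  (HSens : forall v : nat -> Z, Sens M C f v <-> inS n v) :
  forall x y : Vec n, C x -> C y -> f x = f y -> x = y.
Proof.
  intros x y Hx Hy Hfxy. apply NNPP; intro Hne.
  set (d := vsub y x).
  destruct (vec_neq_lead_coord n x y Hne) as [i0 [Hi0 [Ha Hlead]]].
  pose proof (inS_lead_sign n d i0 Hi0 Ha Hlead) as Hv.
  apply HSens in Hv as [_ [pi [_ [t [[_ [Hdiff Hsgn]] Helim]]]]].
  destruct (mean_value_segment n (fun z => pi (f z)) x y) as [s [l [Hs [Hl Hmvt]]]].
  { intros s Hs. apply Hdiff, HC; auto. }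
  apply (eliminates_dir_deriv_neq0 n d (vc d i0) t l Ha Helim).
  - intros i Hi.
    apply (sign_partial_compat n (fun z => pi (f z)) C i (t i)
             (vadd (vscale (1 - s) x) (vscale s y))).
    + exact (Hsgn i Hi).
    + apply HC; auto.
    + apply partial_of_frechet; auto.
  - fold d in Hmvt. rewrite <- Hmvt, Hfxy. ring.
Qed.
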